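(* Consider an $L$-layer LISTA network with initial weights $(W_{10}^l)_{i,j}\sim\mathcal N(0,1)$, $(W_{20}^l)_{i,j}\sim\mathcal N(0,1)$ i.i.d., $l\in[L]$, and suppose $\|W_{20}^l\|\le c_{20}\sqrt m$ for all $l$ with $c_{20}=3$. Then for any $\mathbf W_1,\mathbf W_2$ with $\|\mathbf W_1-\mathbf W_{10}\|\le R_1$ and $\|\mathbf W_2-\mathbf W_{20}\|\le R_2$ and any $s\in[m]$, $$\|\mathbf b_s^l\|\le L_\sigma^{L-l}\big(c_{20}+R_2/\sqrt m\big)^{L-l},\quad l\in[L].$$ In particular, at initialization ($R_2=0$), $\|\mathbf b^l_{s,0}\|\le L_\sigma^{L-l}c_{20}^{L-l}$.
   Context: Fix $\lambda>0$ and $\sigma(x)=\log(1+e^{x-\lambda})-\log(1+e^{-x-\lambda})$ (componentwise), with $|\sigma'|\le L_\sigma$. LISTA: input $\mathbf y\in\mathbb R^n$, initial $\mathbf x^0\in\mathbb R^m$, $\mathbf x^l=\sigma\big(\frac1{\sqrt n}W_1^l\mathbf y+\frac1{\sqrt m}W_2^l\mathbf x^{l-1}\big)$ with $W_1^l\in\mathbb R^{m\times n}$, $W_2^l\in\mathbb R^{m\times m}$, output $\mathbf f=\frac1{\sqrt m}\mathbf x^L$, $f_s$ its $s$-th entry. $\mathbf b_s^l=\partial f_s/\partial\mathbf x^l\in\mathbb R^m$, and $\mathbf b^l_{s,0}$ is $\mathbf b_s^l$ evaluated at the initial weights. $\mathbf W_1=(W_1^l)_l$, $\mathbf W_2=(W_2^l)_l$;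 the distance $\|\mathbf W_1-\mathbf W_{10}\|$ is the Frobenius norm over all entries. $\|\cdot\|$ is the Euclidean norm for vectors and the spectral norm for matrices. *)

From HB Require Import structures.
From mathcomp Require Import all_boot all_order all_algebra.
From mathcomp Require Import all_classical all_reals all_analysis.
Set Implicit Arguments. Unset Strict Implicit. Unset Printing Implicit Defensive.
Import Order.TTheory GRing.Theory Num.Theory.
Import numFieldNormedType.Exports.
Local Open Scope classical_set_scope.
Local Open Scope ring_scope.

Section LISTA.
Variable R : realType.

Definition sigma (lam : R) (x : R) : R :=
  ln (1 + expR (x - lam)) - ln (1 + expR (- x - lam)).

Definition enorm (k : nat) (v : 'cV[R]_k) : R :=
  Num.sqrt (\sum_(i < k) v i ord0 ^+ 2).

Definition spec_norm (p q : nat) (A : 'M[R]_(p, q)) : R :=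
  sup [set enorm (A *m v) | v in [set v : 'cV[R]_q | enorm v <= 1]].

Definition frob_dist (p q : nat) (L : nat) (A B : nat -> 'M[R]_(p, q)) : R :=
  Num.sqrt (\sum_(1 <= l < L.+1) \sum_(i < p) \sum_(j < q) (A l i j - B l i j) ^+ 2).

Definition layer (lam : R) (n m : nat) (W1 : nat -> 'M[R]_(m, n))
  (W2 : nat -> 'M[R]_(m, m)) (y : 'cV[R]_n) (l : nat) (u : 'cV[R]_m) : 'cV[R]_m :=
  map_mx (sigma lam)
    ((Num.sqrt n%:R)^-1 *: (W1 l *m y) + (Num.sqrt m%:R)^-1 *: (W2 l *m u)).

(* Apply layers l+1, ..., l+k starting from u (u plays the role of x^l) *)
Fixpoint fwd (lam : R) (n m : nat) (W1 : nat -> 'M[R]_(m, n))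
  (W2 : nat -> 'M[R]_(m, m)) (y : 'cV[R]_n) (l k : nat) (u : 'cV[R]_m)
  : 'cV[R]_m :=
  match k with
  | 0 => u
  | k'.+1 => layer lam W1 W2 y (l + k'.+1) (fwd lam W1 W2 y l k' u)
  end.

Definition xl (lam : R) (n m : nat) (W1 : nat -> 'M[R]_(m, n))
  (W2 : nat -> 'M[R]_(m, m)) (y : 'cV[R]_n) (x0 : 'cV[R]_m) (l : nat) : 'cV[R]_m :=
  fwd lam W1 W2 y 0 l x0.

(* f_s as a function of x^l:  (1/sqrt m) (x^L)_s *)
Definition f_of_xl (lam : R) (n m L : nat) (W1 : nat -> 'M[R]_(m, n))
  (W2 : nat -> 'M[R]_(m, m)) (y : 'cV[R]_n) (s : 'I_m) (l : nat)
  (u : 'cV[R]_m) : R :=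
  (Num.sqrt m%:R)^-1 * fwd lam W1 W2 y l (L - l) u s ord0.

(* b_s^l = partial f_s / partial x^l, evaluated at the actual x^l *)
Definition bvec (lam : R) (n m L : nat) (W1 : nat -> 'M[R]_(m, n))
  (W2 : nat -> 'M[R]_(m, m)) (y : 'cV[R]_n) (x0 : 'cV[R]_m) (s : 'I_m) (l : nat)
  : 'cV[R]_m :=
  \col_(i < m) 'D_(delta_mx i ord0 : 'cV[R]_m)
                 (f_of_xl lam L W1 W2 y s l) (xl lam W1 W2 y x0 l).

End LISTA.

From HB Require Import structures.
From mathcomp Require Import all_boot all_order all_algebra.
From mathcomp Require Import all_classical all_reals all_analysis.
From mathcomp Require Import ring lra.
Set Implicit Arguments. Unset Strict Implicit. Unset Printing Implicit Defensive.
Import Order.TTheory GRing.Theory Num.Theory.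
Import numFieldNormedType.Exports.
Local Open Scope classical_set_scope.
Local Open Scope ring_scope.

(* By the chain rule, b_s^l = m^(-1/2) J^T e_s, where J = D_L ... D_(l+1) is the
   Jacobian of x^l |-> x^L and D_p = m^(-1/2) diag(sigma'(z^p)) W_2^p.  Each
   transposed factor stretches Euclidean norms by at most
   L_sigma m^(-1/2) (||W_20^p|| + ||W_2^p - W_20^p||_F) <= L_sigma (c_20 + R_2/sqrt m),
   because a matrix and its transpose have the same operator norm and the operator
   norm is dominated by the Frobenius norm; the leading m^(-1/2) <= 1 is dropped. *)

Section EuclideanNorm.
Variable R : realType.
Implicit Types (k p q : nat).

Definition dotmx k (u v : 'cV[R]_k) : R := \sum_(i < k) u i ord0 * v i ord0.

Definition frob_norm p q (A : 'M[R]_(p, q)) : R :=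
  Num.sqrt (\sum_(i < p) \sum_(j < q) A i j ^+ 2).

Lemma le_of_sqr_le (x y : R) : 0 <= y -> x ^+ 2 <= y ^+ 2 -> x <= y.
Proof. by move=> y0 h; nra. Qed.

Lemma enorm_ge0 k (v : 'cV[R]_k) : 0 <= enorm v.
Proof. exact: sqrtr_ge0. Qed.

Lemma sqr_enorm k (v : 'cV[R]_k) : enorm v ^+ 2 = \sum_(i < k) v i ord0 ^+ 2.
Proof. by rewrite sqr_sqrtr //; apply: sumr_ge0 => i _; exact: sqr_ge0. Qed.

Lemma dotmx_enorm k (v : 'cV[R]_k) : dotmx v v = enorm v ^+ 2.
Proof. by rewrite sqr_enorm; apply: eq_bigr => i _; rewrite expr2. Qed.

Lemma enormZ k (a : R) (v : 'cV[R]_k) : enorm (a *: v) = `|a| * enorm v.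
Proof.
rewrite -sqrtr_sqr -sqrtrM ?sqr_ge0 // mulr_sumr.
by congr Num.sqrt; apply: eq_bigr => i _; rewrite mxE exprMn.
Qed.

Lemma enorm_delta_mx k (i : 'I_k) : enorm (delta_mx i ord0 : 'cV[R]_k) = 1.
Proof.
rewrite /enorm (bigD1 i) //= big1 ?addr0 ?mxE ?eqxx ?expr1n ?sqrtr1 //.
by move=> j ji; rewrite mxE (negbTE ji) expr0n.
Qed.

(* Lagrange's identity: the defect in Cauchy-Schwarz is a sum of squares. *)
Lemma cauchy_schwarz_sqr k (u v : 'cV[R]_k) :
  dotmx u v ^+ 2 <= dotmx u u * dotmx v v.
Proof.
pose f i := u i ord0; pose g i := v i ord0.
have lagrange : \sum_(i < k) \sum_(j < k) (f i * g j - f j * g i) ^+ 2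
    = 2 * (dotmx u u * dotmx v v) - 2 * dotmx u v ^+ 2.
  have split : \sum_(i < k) \sum_(j < k) (f i * g j - f j * g i) ^+ 2
      = \sum_(i < k) \sum_(j < k) (f i * f i) * (g j * g j)
        + \sum_(i < k) \sum_(j < k) (g i * g i) * (f j * f j)
        - 2 * \sum_(i < k) \sum_(j < k) (f i * g i) * (f j * g j).
    rewrite mulr_sumr -big_split -sumrB /=; apply: eq_bigr => i _.
    by rewrite mulr_sumr -big_split -sumrB /=; apply: eq_bigr => j _; ring.
  by rewrite split -!big_distrlr /= expr2 /dotmx /f /g; ring.
have : 0 <= \sum_(i < k) \sum_(j < k) (f i * g j - f j * g i) ^+ 2.
  by apply: sumr_ge0 => i _; apply: sumr_ge0 => j _; exact: sqr_ge0.
rewrite lagrange; lra.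
Qed.

Lemma cauchy_schwarz k (u v : 'cV[R]_k) : dotmx u v <= enorm u * enorm v.
Proof.
apply: le_of_sqr_le; first by rewrite mulr_ge0 ?enorm_ge0.
by rewrite exprMn -!dotmx_enorm cauchy_schwarz_sqr.
Qed.

Lemma enormD k (u v : 'cV[R]_k) : enorm (u + v) <= enorm u + enorm v.
Proof.
apply: le_of_sqr_le; first by rewrite addr_ge0 ?enorm_ge0.
have expand : dotmx (u + v) (u + v) = dotmx u u + 2 * dotmx u v + dotmx v v.
  rewrite /dotmx mulr_sumr -!big_split /=; apply: eq_bigr => i _.
  by rewrite !mxE; ring.
rewrite -dotmx_enorm expand !dotmx_enorm sqrrD.
have := cauchy_schwarz u v; lra.
Qed.

Lemma dotmx_trmx p q (A : 'M[R]_(p, q)) (u : 'cV[R]_q) (v : 'cV[R]_p) :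
  dotmx u (A^T *m v) = dotmx (A *m u) v.
Proof.
rewrite /dotmx; under eq_bigr do rewrite mxE mulr_sumr.
under [RHS]eq_bigr do rewrite mxE mulr_suml.
rewrite exchange_big; apply: eq_bigr => j _; apply: eq_bigr => i _.
by rewrite mxE; ring.
Qed.

Lemma enorm_mulmx_frob p q (A : 'M[R]_(p, q)) (v : 'cV[R]_q) :
  enorm (A *m v) <= frob_norm A * enorm v.
Proof.
apply: le_of_sqr_le; first by rewrite mulr_ge0 ?sqrtr_ge0 ?enorm_ge0.
rewrite exprMn sqr_enorm sqr_sqrtr; last first.
  by apply: sumr_ge0 => i _; apply: sumr_ge0 => j _; exact: sqr_ge0.
rewrite mulr_suml; apply: ler_sum => i _.
have := cauchy_schwarz_sqr (row i A)^T v.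
have -> : dotmx (row i A)^T v = (A *m v) i ord0.
  by rewrite mxE; apply: eq_bigr => j _; rewrite !mxE.
have -> : dotmx (row i A)^T (row i A)^T = \sum_(j < q) A i j ^+ 2.
  by apply: eq_bigr => j _; rewrite !mxE expr2.
by rewrite dotmx_enorm.
Qed.

Lemma enorm0 k : enorm (0 : 'cV[R]_k) = 0.
Proof. by rewrite -(scale0r 0) enormZ normr0 mul0r. Qed.

Lemma enorm_diag_mulmx k (d : 'rV[R]_k) (c : R) (v : 'cV[R]_k) :
  0 <= c -> (forall i, `|d 0 i| <= c) -> enorm (diag_mx d *m v) <= c * enorm v.
Proof.
move=> c0 dc; apply: le_of_sqr_le; first by rewrite mulr_ge0 ?enorm_ge0.
rewrite exprMn !sqr_enorm mulr_sumr; apply: ler_sum => i _.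
rewrite mul_diag_mx mxE exprMn ler_wpM2r ?sqr_ge0 //.
by rewrite -real_normK ?num_real // ler_sqr ?nnegrE.
Qed.

Lemma frob_norm0 p q : frob_norm (0 : 'M[R]_(p, q)) = 0.
Proof.
by rewrite /frob_norm big1 ?sqrtr0 // => i _; rewrite big1 // => j _; rewrite mxE expr0n.
Qed.

Lemma frob_norm_le_frob_dist p q L (A B : nat -> 'M[R]_(p, q)) l :
  (1 <= l <= L)%N -> frob_norm (A l - B l) <= frob_dist L A B.
Proof.
move=> lL; rewrite ler_sqrt; last first.
  by do 3!(apply: sumr_ge0 => ? _); exact: sqr_ge0.
rewrite (bigD1_seq l) ?iota_uniq ?mem_index_iota //=.
have -> : \sum_(i < p) \sum_(j < q) (A l - B l) i j ^+ 2
        = \sum_(i < p) \sum_(j < q) (A l i j - B l i j) ^+ 2.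
  by apply: eq_bigr => i _; apply: eq_bigr => j _; rewrite !mxE.
rewrite lerDl.
by do 3!(apply: sumr_ge0 => ? _); exact: sqr_ge0.
Qed.

Section SpectralNorm.
Variables (p q : nat) (A : 'M[R]_(p, q)).

Let image_unit_ball := [set enorm (A *m v) | v in [set v : 'cV[R]_q | enorm v <= 1]].

Let image_unit_ball_ubound : has_ubound image_unit_ball.
Proof.
exists (frob_norm A) => _ [v /= v1 <-].
apply: le_trans (enorm_mulmx_frob A v) _.
by rewrite ler_piMr ?sqrtr_ge0.
Qed.

Lemma enorm_mulmx_le_spec_norm v : enorm v <= 1 -> enorm (A *m v) <= spec_norm A.
Proof. by move=> v1; apply: (ub_le_sup image_unit_ball_ubound); exists v. Qed.

Lemma spec_norm_ge0 : 0 <= spec_norm A.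
Proof.
apply: le_trans (enorm_mulmx_le_spec_norm (v := 0) _); first exact: enorm_ge0.
by rewrite enorm0 ler01.
Qed.

Lemma spec_norm_le_frob : spec_norm A <= frob_norm A.
Proof.
apply: ge_sup; first by exists (enorm (A *m 0)), 0; rewrite //= enorm0 ler01.
by move=> _ [v /= v1 <-]; apply: le_trans (enorm_mulmx_frob A v) _; rewrite ler_piMr ?sqrtr_ge0.
Qed.

Lemma enorm_mulmx_spec v : enorm (A *m v) <= spec_norm A * enorm v.
Proof.
have [v0|v_neq0] := eqVneq (enorm v) 0.
  by apply: le_trans (enorm_mulmx_frob A v) _; rewrite v0 !mulr0.
have v_gt0 : 0 < enorm v by rewrite lt_def v_neq0 enorm_ge0.
rewrite mulrC -ler_pdivrMl //.
have := enorm_mulmx_le_spec_norm (v := (enorm v)^-1 *: v).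
rewrite -scalemxAr !enormZ ger0_norm ?invr_ge0 ?enorm_ge0 // mulVf //.
by apply.
Qed.

Lemma enorm_trmx_mulmx (B : R) v : spec_norm A <= B -> enorm (A^T *m v) <= B * enorm v.
Proof.
move=> AB; set z := A^T *m v; set b := B * enorm v.
have b0 : 0 <= b by rewrite mulr_ge0 ?enorm_ge0 // (le_trans spec_norm_ge0).
have : enorm z ^+ 2 <= enorm z * b.
  rewrite -dotmx_enorm {2}/z dotmx_trmx; apply: le_trans (cauchy_schwarz _ _) _.
  rewrite /b mulrA ler_wpM2r ?enorm_ge0 //; apply: le_trans (enorm_mulmx_spec z) _.
  by rewrite mulrC ler_wpM2l ?enorm_ge0.
have := enorm_ge0 z; nra.
Qed.

End SpectralNorm.

End EuclideanNorm.

Section SigmaDerivative.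
Variables (R : realType) (lam : R).

Let softplus_affine_derivable (a : R) x :
  derivable (fun x => ln (1 + expR (a * x - lam))) x 1.
Proof.
have inner : is_derive x 1 (fun x => 1 + expR (a * x - lam)) (expR (a * x - lam) * a).
  have -> : (fun x => 1 + expR (a * x - lam))
          = cst 1 + expR \o (a *: id - cst lam) :> (R -> R) by apply/funext.
  by apply: is_derive_eq; rewrite add0r subr0 [a%:A]mulr1.
have pos : 0 < 1 + expR (a * x - lam) by rewrite addr_gt0 ?expR_gt0.
by case: (is_derive1_comp (f := @ln R) (g := fun x => 1 + expR (a * x - lam))
  (is_derive1_ln pos) inner).
Qed.

Lemma sigma_is_derive (x : R) : is_derive x 1 (sigma lam) (derive1 (sigma lam) x).
Proof.
have -> : sigma lam = (fun x => ln (1 + expR (1 * x - lam)))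
                    - (fun x => ln (1 + expR (-1 * x - lam))) :> (R -> R).
  by apply/funext => t; rewrite /sigma !fctE mul1r mulN1r.
rewrite derive1E; apply: derivableP.
by apply: (@derivableB _ R R); exact: softplus_affine_derivable.
Qed.

End SigmaDerivative.

Lemma derive_along_line (R : realType) (V : normedModType R) (f : V -> R) (x v : V) :
  'D_v f x = 'D_1 (fun h : R => f (h *: v + x)) 0.
Proof.
rewrite /derive /=; f_equal; f_equal; apply/funext => h /=.
by rewrite addr0 scale0r add0r [_%:A]mulr1.
Qed.

Section Jacobian.
Variables (R : realType) (lam : R) (n m : nat).
Variables (W1 : nat -> 'M[R]_(m, n)) (W2 : nat -> 'M[R]_(m, m)) (y : 'cV[R]_n).

Local Notation K := (Num.sqrt (m%:R : R))^-1.

Definition is_derive_entrywise (t0 : R) (u : R -> 'cV[R]_m) (du : 'cV[R]_m) :=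
  forall i, is_derive t0 1 (fun t => u t i ord0) (du i ord0).

Definition preact l (v : 'cV[R]_m) : 'cV[R]_m :=
  (Num.sqrt (n%:R : R))^-1 *: (W1 l *m y) + K *: (W2 l *m v).

Definition layer_jacobian l (v : 'cV[R]_m) : 'M[R]_m :=
  K *: (diag_mx (\row_i derive1 (sigma lam) (preact l v i ord0)) *m W2 l).

Fixpoint fwd_jacobian l k (v : 'cV[R]_m) : 'M[R]_m :=
  match k with
  | 0 => 1%:M
  | k'.+1 => layer_jacobian (l + k'.+1) (fwd lam W1 W2 y l k' v) *m fwd_jacobian l k' v
  end.

Lemma layer_is_derive l (v : R -> 'cV[R]_m) dv t0 :
  is_derive_entrywise t0 v dv ->
  is_derive_entrywise t0 (fun t => layer lam W1 W2 y l (v t))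
    (layer_jacobian l (v t0) *m dv).
Proof.
move=> v_dv i.
have dW2v : is_derive t0 1 (fun t => (W2 l *m v t) i ord0) ((W2 l *m dv) i ord0).
  have -> : (fun t => (W2 l *m v t) i ord0)
          = \sum_(j < m) (W2 l i j *: (fun t => v t j ord0)).
    by apply/funext => t; rewrite fct_sumE mxE.
  by rewrite mxE; apply: is_derive_sum => j; exact: is_deriveZ.
have dz : is_derive t0 1 (fun t => preact l (v t) i ord0) (K * (W2 l *m dv) i ord0).
  have -> : (fun t => preact l (v t) i ord0)
          = cst (((Num.sqrt (n%:R : R))^-1 *: (W1 l *m y)) i ord0)
            + K *: (fun t => (W2 l *m v t) i ord0).
    by apply/funext => t; rewrite /preact !fctE !mxE.
  by apply: is_derive_eq; rewrite add0r.
have -> : (fun t => layer lam W1 W2 y l (v t) i ord0)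
        = sigma lam \o (fun t => preact l (v t) i ord0).
  by apply/funext => t; rewrite /layer mxE.
apply: is_derive_eq.
  exact: (is_derive1_comp (g := fun t => preact l (v t) i ord0) (sigma_is_derive _ _) dz).
by rewrite /layer_jacobian -scalemxAl -mulmxA mxE mul_diag_mx !mxE mulrCA.
Qed.

Lemma fwd_is_derive l k (u : R -> 'cV[R]_m) du t0 :
  is_derive_entrywise t0 u du ->
  is_derive_entrywise t0 (fun t => fwd lam W1 W2 y l k (u t))
    (fwd_jacobian l k (u t0) *m du).
Proof.
move=> u_du; elim: k => [|k IH] /=; first by rewrite mul1mx.
by rewrite -mulmxA; apply: layer_is_derive.
Qed.

Lemma bvecE L x0 s l :
  bvec lam L W1 W2 y x0 s l
  = K *: ((fwd_jacobian l (L - l) (xl lam W1 W2 y x0 l))^T *m delta_mx s ord0).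
Proof.
apply/matrixP => i j; rewrite (ord1 j) {j} mxE [RHS]mxE -colE !mxE derive_along_line.
set x := xl lam W1 W2 y x0 l; set e : 'cV[R]_m := delta_mx i ord0.
have line : is_derive_entrywise 0 (fun t : R => t *: e + x) e.
  move=> j'; have -> : (fun t : R => (t *: e + x) j' ord0)
                     = e j' ord0 *: id + cst (x j' ord0) :> (R -> R).
    by apply/funext => t; rewrite !mxE !fctE /= mulrC.
  by apply: is_derive_eq; rewrite addr0 [_ *: 1]mulr1.
have := is_deriveZ K (fwd_is_derive l (L - l) line s).
rewrite scale0r add0r -colE mxE => d_fwd.
have d_f : is_derive (0 : R) 1 (fun h : R => f_of_xl lam L W1 W2 y s l (h *: e + x))
                         (K * fwd_jacobian l (L - l) x s i) := d_fwd.
exact: (@derive_val _ R R _ _ _ _ d_f).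
Qed.

Lemma enorm_trmx_fwd_jacobian l k v (c : R) (w : 'cV[R]_m) :
  0 <= c ->
  (forall p v' w', (l < p <= l + k)%N ->
     enorm ((layer_jacobian p v')^T *m w') <= c * enorm w') ->
  enorm ((fwd_jacobian l k v)^T *m w) <= c ^+ k * enorm w.
Proof.
move=> c0; elim: k w => [|k IH] w layer_le /=.
  by rewrite trmx1 mul1mx expr0 mul1r.
rewrite trmx_mul -mulmxA; apply: le_trans (IH _ _) _.
  by move=> p v' w' /andP[lp pk]; apply: layer_le; rewrite lp addnS (leqW pk).
rewrite exprSr -mulrA ler_wpM2l ?exprn_ge0 //.
by apply: layer_le; rewrite addnS ltnS leq_addr leqnn.
Qed.

End Jacobian.

Section GradientBound.
Variables (R : realType) (lam Ls c20 R2 : R) (n m L : nat).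
Variables (W1 : nat -> 'M[R]_(m, n)) (W2 W20 : nat -> 'M[R]_(m, m)) (y : 'cV[R]_n).
Hypothesis sigma'_le : forall x, `|derive1 (sigma lam) x| <= Ls.
Hypothesis W20_le : forall l, (1 <= l <= L)%N -> spec_norm (W20 l) <= c20 * Num.sqrt m%:R.
Hypothesis W2_near : forall l, (1 <= l <= L)%N -> frob_norm (W2 l - W20 l) <= R2.
Hypothesis m_gt0 : (0 < m)%N.

Local Notation K := (Num.sqrt (m%:R : R))^-1.

Let K_le1 : K <= 1.
Proof. by rewrite invf_le1 ?sqrtr_gt0 ?ltr0n // -[leLHS]sqrtr1 ler_sqrt ?ler1n. Qed.

Let Ls_ge0 : 0 <= Ls.
Proof. exact: le_trans (normr_ge0 _) (sigma'_le 0). Qed.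

Let weight_bound_ge0 p : (1 <= p <= L)%N -> 0 <= c20 * Num.sqrt m%:R + R2.
Proof.
move=> pL; apply: addr_ge0.
  exact: le_trans (spec_norm_ge0 _) (W20_le pL).
exact: le_trans (sqrtr_ge0 _) (W2_near pL).
Qed.

Let weight_boundE : c20 + R2 / Num.sqrt m%:R = K * (c20 * Num.sqrt m%:R + R2).
Proof. by field; rewrite gt_eqF ?sqrtr_gt0 ?ltr0n. Qed.

Lemma enorm_trmx_layer_jacobian p v w : (1 <= p <= L)%N ->
  enorm ((layer_jacobian lam W1 W2 y p v)^T *m w)
    <= Ls * (c20 + R2 / Num.sqrt m%:R) * enorm w.
Proof.
move=> pL; set d : 'rV[R]_m := \row_i derive1 (sigma lam) (preact W1 W2 y p v i ord0).
have W2_le : enorm ((W2 p)^T *m (diag_mx d *m w))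
    <= (c20 * Num.sqrt m%:R + R2) * enorm (diag_mx d *m w).
  have -> : W2 p = W20 p + (W2 p - W20 p) by rewrite addrC subrK.
  rewrite linearD /= mulmxDl mulrDl; apply: le_trans (enormD _ _) _.
  apply: lerD; apply: enorm_trmx_mulmx; first exact: W20_le.
  exact: le_trans (spec_norm_le_frob _) (W2_near pL).
have d_le : enorm (diag_mx d *m w) <= Ls * enorm w.
  by apply: enorm_diag_mulmx => // i; rewrite mxE.
rewrite /layer_jacobian linearZ /= trmx_mul tr_diag_mx -scalemxAl -mulmxA enormZ.
rewrite ger0_norm // weight_boundE mulrCA -!mulrA ler_wpM2l //.
apply: le_trans W2_le _; rewrite mulrCA ler_wpM2l //; exact: weight_bound_ge0 pL.
Qed.

Lemma enorm_bvec_le x0 s l : (1 <= l <= L)%N ->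
  enorm (bvec lam L W1 W2 y x0 s l) <= (Ls * (c20 + R2 / Num.sqrt m%:R)) ^+ (L - l).
Proof.
move=> /andP[l_ge1 l_leL].
have c_ge0 : 0 <= Ls * (c20 + R2 / Num.sqrt m%:R).
  by rewrite weight_boundE mulr_ge0 ?mulr_ge0 ?(@weight_bound_ge0 l) ?l_ge1.
have := @enorm_trmx_fwd_jacobian R lam n m W1 W2 y l (L - l) (xl lam W1 W2 y x0 l)
  _ (delta_mx s ord0) c_ge0.
rewrite enorm_delta_mx mulr1 subnKC // => J_le.
rewrite bvecE enormZ ger0_norm //; apply: le_trans (ler_piMl _ K_le1) _.
  exact: enorm_ge0.
apply: J_le => p v w /andP[lp pL]; apply: enorm_trmx_layer_jacobian.
by rewrite pL (leq_trans l_ge1 (ltnW lp)).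
Qed.

End GradientBound.

Theorem lemma6 (R : realType) (lam : R) (Lsig : R) (n m L : nat)
  (y : 'cV[R]_n) (x0 : 'cV[R]_m)
  (W10 W1 : nat -> 'M[R]_(m, n)) (W20 W2 : nat -> 'M[R]_(m, m)) (R1 R2 : R) :
  0 < lam ->
  (forall x : R, `|derive1 (sigma lam) x| <= Lsig) ->
  (forall l : nat, (1 <= l <= L)%N -> spec_norm (W20 l) <= 3 * Num.sqrt m%:R) ->
  frob_dist L W1 W10 <= R1 ->
  frob_dist L W2 W20 <= R2 ->
  (forall (s : 'I_m) (l : nat), (1 <= l <= L)%N ->
     enorm (bvec lam L W1 W2 y x0 s l)
       <= Lsig ^+ (L - l) * (3 + R2 / Num.sqrt m%:R) ^+ (L - l))
  /\
  (forall (s : 'I_m) (l : nat), (1 <= l <= L)%N ->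
     enorm (bvec lam L W10 W20 y x0 s l)
       <= Lsig ^+ (L - l) * 3 ^+ (L - l)).
Proof.
move=> _ sigma'_le W20_le _ W2_near.
split=> s l lL; have m_gt0 : (0 < m)%N := leq_ltn_trans (leq0n s) (ltn_ord s).
  rewrite -exprMn; apply: (enorm_bvec_le W1 y sigma'_le W20_le) => // p pL.
  exact: le_trans (frob_norm_le_frob_dist _ _ pL) W2_near.
have W20_near p : (1 <= p <= L)%N -> frob_norm (W20 p - W20 p) <= 0.
  by rewrite subrr frob_norm0.
have := enorm_bvec_le W10 y sigma'_le W20_le W20_near m_gt0 x0 s lL.
by rewrite mul0r addr0 -exprMn.
Qed.
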